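(* For every $\varepsilon\in\left(0,\tfrac12\right)$, there is a (deterministic) sliding-window $(4+\varepsilon)$-approximation algorithm for the minimum vertex cover, with space $O\!\left(\varepsilon^{-1}n\log^{2}n\right)$ bits; that is, at every time the algorithm outputs a set of vertices that is a vertex cover of the graph formed by the active window $W$ and whose size is at most $(4+\varepsilon)\cdot VC(W)$.
   Context: Graph-streaming sliding-window model: a stream of edge insertions of a simple graph on $V=[n]$ ($n$ known), no edge inserted twice (so window size $w\le n^2$). The window size $w$ is known in advance; the current graph is formed by the last $w$ edges (the active window $W$). The algorithm reads the stream once in order. $VC(W)$ denotes the minimum size of a vertex cover (a vertex set meeting every edge) of the graph on $V$ with edge set $W$. *)

From mathcomp Require Import all_boot.
From Stdlib Require Import Reals.

Set Implicit Arguments.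
Unset Strict Implicit.
Unset Printing Implicit Defensive.

(* An edge of a simple graph on V = [n] = 'I_n, stored canonically as (u, v) with u < v. *)
Definition Edge (n : nat) := ('I_n * 'I_n)%type.

Definition valid_stream (n : nat) (s : seq (Edge n)) : bool :=
  uniq s && all (fun e : Edge n => (nat_of_ord e.1 < nat_of_ord e.2)%N) s.

Definition window (T : Type) (w : nat) (s : seq T) : seq T := drop (size s - w) s.

Definition is_vertex_cover (n : nat) (W : seq (Edge n)) (C : {set 'I_n}) : bool :=
  all (fun e : Edge n => (e.1 \in C) || (e.2 \in C)) W.

(* VC(W): the minimum size of a vertex cover (setT always is one, of size n). *)
Definition vc_number (n : nat) (W : seq (Edge n)) : nat :=
  \big[minn/n]_(C : {set 'I_n} | is_vertex_cover W C) #|C|.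

Record stream_algorithm (n S : nat) := StreamAlgorithm {
  alg_init : S.-tuple bool;
  alg_step : S.-tuple bool -> Edge n -> S.-tuple bool;
  alg_out  : S.-tuple bool -> {set 'I_n}
}.

Definition run (n S : nat) (A : stream_algorithm n S) (s : seq (Edge n)) : S.-tuple bool :=
  foldl (alg_step A) (alg_init A) s.

Definition log2R (x : R) : R := (ln x / ln 2)%R.

(* The algorithm maintains a smooth histogram of greedy maximal matchings.  A
   bucket (a, G) records the vertex set G of the greedy maximal matching of the
   edges that arrived since time a; started from a vertex set V instead of the
   empty set, greedy returns a vertex cover of size at most |V| + 2 VC.  Each
   edge opens a new bucket and is fed to every bucket; then a bucket is deleted
   whenever its two neighbours x, z satisfy m |G_x| <= (m+1) |G_z|.  The sizes
   thus shrink by a factor m/(m+1) every two buckets, so at most 2 m log n + O(1)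
   buckets survive, each stored in O(n + log n) bits.  A query returns G_x for
   the last bucket x starting no later than the window.  Its successor z starts
   inside the window, and when the buckets between x and z were deleted, at some
   time t, m |G_x(t)| <= (m+1) |G_z(t)| <= 2 (m+1) VC(W); the edges after t add
   at most 2 VC(W) to G_x, so m |G_x| <= (4m + 2) VC(W).  Taking m of order
   2/eps gives the claim. *)

From mathcomp Require Import all_boot zify.
From Stdlib Require Import Reals Lra Psatz.
From Stdlib Require ZArith.
(* Importing Reals rebinds [_ ^ _] on [nat] to [Nat.pow]; restore ssrnat's notations. *)
From mathcomp Require Import ssrnat.

Set Implicit Arguments.
Unset Strict Implicit.
Unset Printing Implicit Defensive.

Lemma sub_drop (T : eqType) (s : seq T) a b : a <= b -> {subset drop b s <= drop a s}.
Proof. by move=> le_ab x; rewrite -(subnK le_ab) -drop_drop => /mem_drop. Qed.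

Lemma head_rcons (T : Type) (d y : T) p : head d (rcons p y) = head y p.
Proof. by case: p. Qed.

Lemma sorted_rcons2 (T : Type) (e : rel T) p a b :
  sorted e (rcons (rcons p a) b) = sorted e (rcons p a) && e a b.
Proof. by case: p => [|x p] /=; rewrite ?andbT // rcons_path last_rcons. Qed.

Lemma leq_wexp2r a b k : a <= b -> a ^ k <= b ^ k.
Proof. by move=> le_ab; elim: k => // k IHk; rewrite !expnS leq_mul. Qed.

(** * Greedy maximal matchings *)

Section VertexCover.

Variable n : nat.
Implicit Types (V C : {set 'I_n}) (e : Edge n) (W : seq (Edge n)).

Lemma sub_vertex_cover W W' C :
  {subset W' <= W} -> is_vertex_cover W C -> is_vertex_cover W' C.
Proof. by move=> sW /allP coverW; apply/allP => e /sW /coverW. Qed.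

Lemma leq_vc_number k c W :
  k <= c * n -> (forall C, is_vertex_cover W C -> k <= c * #|C|) ->
  k <= c * vc_number W.
Proof.
move=> le_k_n le_k_cover; rewrite /vc_number.
elim/big_ind: _ => // a b /= le_ka le_kb.
by rewrite /minn; case: ifP.
Qed.

Definition greedy_step V e : {set 'I_n} :=
  if (e.1 \notin V) && (e.2 \notin V) then e.1 |: (e.2 |: V) else V.

Definition greedy V W : {set 'I_n} := foldl greedy_step V W.

Lemma subset_greedy_step V e : V \subset greedy_step V e.
Proof.
rewrite /greedy_step; case: ifP => _ //.
by apply/subsetP => x xV; rewrite !in_setU1 xV !orbT.
Qed.

Lemma subset_greedy V W : V \subset greedy V W.
Proof.
elim: W V => [|e W IHW] V /=; first exact: subxx.
exact: subset_trans (subset_greedy_step V e) (IHW _).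
Qed.

Lemma greedy_cover V W : is_vertex_cover W (greedy V W).
Proof.
elim: W V => [|e W IHW] V //=; rewrite /is_vertex_cover /= -/(is_vertex_cover _ _).
rewrite IHW andbT; have /subsetP sub_greedy := subset_greedy (greedy_step V e) W.
suff /orP[/sub_greedy -> // | /sub_greedy ->] :
    (e.1 \in greedy_step V e) || (e.2 \in greedy_step V e).
  exact: orbT.
rewrite /greedy_step; case: ifP => [_|/negbT]; first by rewrite !in_setU1 eqxx.
by rewrite negb_and !negbK.
Qed.

(* A step adds either nothing or two vertices outside V, one of which lies in C
   because C covers e. *)
Lemma greedy_step_card V C e : (e.1 \in C) || (e.2 \in C) ->
  #|greedy_step V e| + 2 * #|C :&: V| <= #|V| + 2 * #|C :&: greedy_step V e|.
Proof.
move=> coverCe; rewrite /greedy_step; case: ifP => [/andP[e1V e2V]|_] //.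
set V' := _ |: _.
have card_V' : #|V'| <= #|V| + 2.
  by rewrite /V' !cardsU1 addnA addnC leq_add2l (leq_add (leq_b1 _) (leq_b1 _)).
have [v [vC vV vV']] : exists v, [/\ v \in C, v \notin V & v \in V'].
  by case/orP: coverCe => vC; [exists e.1 | exists e.2];
    rewrite ?e1V ?e2V /V' !in_setU1 eqxx ?orbT.
have : #|v |: (C :&: V)| <= #|C :&: V'|.
  apply/subset_leq_card/subsetP => x; rewrite in_setU1 => /orP[/eqP -> | ].
    by rewrite inE vC vV'.
  by rewrite !inE => /andP[-> xV]; rewrite xV !orbT.
rewrite cardsU1 inE (negbTE vV) andbF add1n; move: card_V'.
set a := #|C :&: V|; set b := #|C :&: V'|; set c := #|V'|; set d := #|V|; lia.
Qed.

Lemma greedy_card_le V C W :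
  is_vertex_cover W C -> #|greedy V W| <= #|V| + 2 * #|C|.
Proof.
move=> coverC; have : #|C :&: greedy V W| <= #|C| by rewrite subset_leq_card ?subsetIl.
suff : #|greedy V W| + 2 * #|C :&: V| <= #|V| + 2 * #|C :&: greedy V W| by lia.
elim: W V coverC => [|e W IHW] V /=; first by lia.
case/andP=> coverCe coverC; have := IHW (greedy_step V e) coverC.
have := greedy_step_card V coverCe; rewrite /greedy /=; lia.
Qed.

End VertexCover.

(** * Pruning a sequence *)

Section Prune.

Variables (X : eqType) (redundant : X -> X -> bool).

Fixpoint sparse (l : seq X) : bool :=
  if l is x :: (_ :: z :: _) as r then ~~ redundant x z && sparse r else true.

Lemma sparse_drop k l : sparse l -> sparse (drop k l).
Proof.
elim: k l => [|k IHk] [|x r] //= sparse_xr; apply: IHk.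
by case: r sparse_xr => [|y [|z r]] //= /andP[].
Qed.

Lemma sparse_nth x0 l i :
  sparse l -> i.+2 < size l -> ~~ redundant (nth x0 l i) (nth x0 l i.+2).
Proof.
move=> sparse_l lt_i2_l; have := sparse_drop i sparse_l.
have : 2 < size (drop i l) by rewrite size_drop; lia.
have -> : nth x0 l i = nth x0 (drop i l) 0 by rewrite nth_drop addn0.
have -> : nth x0 l i.+2 = nth x0 (drop i l) 2 by rewrite nth_drop addn2.
by case: (drop i l) => [|x [|y [|z r]]] //= _ /andP[].
Qed.

Fixpoint push (x : X) (r : seq X) : seq X :=
  if r is _ :: (z :: _) as r' then
    if redundant x z then push x r' else x :: r
  else x :: r.

Definition prune (l : seq X) : seq X := foldr push [::] l.

Lemma push_spec x0 x r : exists2 k, push x r = x :: drop k r &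
  [/\ k = 0 \/ k < size r /\ redundant x (nth x0 r k),
      k <= size r & size r <= k.+1 \/ ~~ redundant x (nth x0 r k.+1)].
Proof.
elim: r => [|y [|z r] IHr]; try by exists 0; split; auto.
have -> : push x [:: y, z & r] =
  if redundant x z then push x (z :: r) else [:: x, y, z & r] by [].
case: ifP => red_xz; last by exists 0; split; auto; rewrite /= red_xz; right.
case: IHr => k -> [k0_red le_k stop]; exists k.+1; split => //.
by right; case: k0_red => [->|[]].
Qed.

Lemma head_prune x0 l : head x0 (prune l) = head x0 l.
Proof. by case: l => [|x l] //=; case: (push_spec x0 x (prune l)) => k ->. Qed.

Lemma subseq_prune l : subseq (prune l) l.
Proof.
elim: l => [|x l IHl] //=; case: (push_spec x x (prune l)) => k -> _.
by rewrite /= eqxx (subseq_trans (drop_subseq _ _) IHl).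
Qed.

Lemma sparse_prune l : sparse (prune l).
Proof.
elim: l => [|x l IHl] //=; case: (push_spec x x (prune l)) => k -> [_ _ stop].
have {}stop : size (drop k (prune l)) <= 1 \/ ~~ redundant x (nth x (drop k (prune l)) 1).
  by rewrite size_drop nth_drop addn1; case: stop; [left; lia | right].
move: (sparse_drop k IHl) stop.
by case: (drop k _) => [|y [|z r]] // sparse_r [//|not_red]; apply/andP.
Qed.

Lemma path_rcons_head (e : rel X) x l y :
  path e x (rcons l y) = e x (head y l) && sorted e (rcons l y).
Proof. by case: l. Qed.

Lemma sorted_prune (ok : rel X) y l :
  {in l &, forall x z, redundant x z -> ok x z} ->
  sorted ok (rcons l y) -> sorted ok (rcons (prune l) y).
Proof.
elim: l => [|x l IHl] //= red_ok; rewrite path_rcons_head => /andP[ok_x sorted_ly].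
have sorted_r := IHl (sub_in2 (fun u ul => mem_behead ul) red_ok) sorted_ly.
case: (push_spec y x (prune l)) => k -> [k0_red le_k _].
rewrite /= path_rcons_head -drop_rcons //; apply/andP; split; last first.
  by move: sorted_r; rewrite -{1}(cat_take_drop k (rcons _ y)) => /cat_sorted2[].
case: k0_red => [-> | [lt_k red_x]]; first by rewrite drop0 head_prune.
rewrite -nth0 nth_drop addn0; apply: red_ok red_x; first exact: mem_head.
by rewrite inE (mem_subseq (subseq_prune l)) ?mem_nth ?orbT.
Qed.

End Prune.

Lemma bernoulli_expn m k : m ^ k * (m + k) <= m * m.+1 ^ k.
Proof.
elim: k => [|k IHk]; first by rewrite !expn0 mul1n muln1 addn0.
have := leq_mul (leqnn m.+1) IHk; rewrite !expnS.
set a := m ^ k; set b := m.+1 ^ k; nia.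
Qed.

Lemma expn_succ_ge m : 0 < m -> 2 * m ^ m <= m.+1 ^ m.
Proof.
move=> m_gt0; rewrite -(leq_pmul2l m_gt0); apply: leq_trans (bernoulli_expn m m).
by set a := m ^ m; nia.
Qed.

Section SparseDecay.

Variables (X : eqType) (c : X -> nat) (m : nat).

Definition close (x z : X) := m * c x <= m.+1 * c z.

Lemma sparse_close_decay x0 l j : sparse close l -> 2 * j < size l ->
  m.+1 ^ j * c (nth x0 l (2 * j)) <= m ^ j * c (head x0 l).
Proof.
move=> sparse_l; elim: j => [|j IHj] lt_2j_l; first by rewrite !expn0 !mul1n nth0.
rewrite mulnS /= in lt_2j_l *.
have := sparse_nth x0 sparse_l lt_2j_l; rewrite /close -ltnNge.
have := IHj (ltnW (ltnW lt_2j_l)); rewrite !expnS.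
set a := m.+1 ^ j; set b := m ^ j; set u := c _; set v := c _; set w := c _; nia.
Qed.

Lemma sparse_close_size n L l : 0 < m -> n < 2 ^ L ->
  {in l, forall x, c x <= n} -> sparse close l -> size l <= 2 * m * L + 2.
Proof.
move=> m_gt0 n_lt c_le sparse_l; rewrite leqNgt; apply/negP => long_l.
case: l long_l c_le sparse_l => // x0 l' long_l c_le sparse_l.
set l := x0 :: l' in long_l c_le sparse_l; set j := m * L.
have lt_2j2 : (2 * j).+2 < size l by rewrite /j; lia.
have decay := sparse_close_decay x0 sparse_l (ltnW (ltnW lt_2j2)).
have c_pos : 0 < c (nth x0 l (2 * j)).
  have := sparse_nth x0 sparse_l lt_2j2; rewrite /close -ltnNge lt0n.
  by apply: contraTneq => ->; rewrite muln0 ltn0.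
have c_x0 : c x0 <= n by apply: c_le; exact: mem_head.
have := leq_wexp2r L (expn_succ_ge m_gt0); rewrite expnMn -!expnM -/j.
move: decay c_pos => /=; set a := m.+1 ^ j; set b := m ^ j; set d := c _; nia.
Qed.

End SparseDecay.

(** * The sliding-window algorithm *)

Definition bucket n := (nat * {set 'I_n})%type.
Definition state n := (nat * seq (bucket n))%type.

Section Algorithm.

Variables (n m : nat).
Implicit Types (s : seq (Edge n)) (e : Edge n) (x : bucket n) (st : state n).

Local Notation close_buckets := (close (fun x : bucket n => #|x.2|) m).

Definition bucket_step e x : bucket n := (x.1, greedy_step x.2 e).

(* The state is (clock, buckets).  The empty bucket (clock, set0) describes the
   empty suffix: it is the bucket that the next edge opens, and it serves as a
   sentinel after the last bucket. *)
Definition extended st := rcons st.2 (st.1, set0).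

Definition window_step st e : state n :=
  (st.1.+1, prune close_buckets (map (bucket_step e) (extended st))).

Definition window_state s := foldl window_step (0, [::]) s.

Definition seg a t s := take (t - a) (drop a s).

Definition witness s a b := [exists t : 'I_(size s).+1,
  (b <= t) && (m * #|greedy set0 (seg a t s)| <= m.+1 * #|greedy set0 (seg b t s)|)].

(* Adjacent buckets start at consecutive times, or were made adjacent by
   pruning, at a time witnessing that they were close. *)
Definition linked s a b := (b == a.+1) || witness s a b.

Definition valid s x := (x.1 <= size s) && (x.2 == greedy set0 (drop x.1 s)).

Definition window_invariant s st :=
  [/\ st.1 = size s, all (valid s) (extended st), (head (0, set0) (extended st)).1 = 0,
      sorted (relpre fst (linked s)) (extended st) & sparse close_buckets st.2].

Lemma seg_rcons s e a t : t <= size s -> seg a t (rcons s e) = seg a t s.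
Proof.
move=> le_ts; rewrite /seg; case: (leqP a (size s)) => [le_as | lt_sa].
  by rewrite drop_rcons // -cats1 takel_cat // size_drop leq_sub2r.
have -> : t - a = 0 by lia.
by rewrite !take0.
Qed.

Lemma witness_rcons s e a b : witness s a b -> witness (rcons s e) a b.
Proof.
case/existsP=> t /andP[le_bt close_t]; apply/existsP.
have le_t : t < (size (rcons s e)).+1 by rewrite size_rcons ltnS ltnW.
by exists (Ordinal le_t); rewrite /= le_bt !seg_rcons // -ltnS.
Qed.

Lemma linked_rcons s e : subrel (linked s) (linked (rcons s e)).
Proof.
by move=> a b; rewrite /linked => /orP[-> // | /(witness_rcons e) ->]; rewrite orbT.
Qed.

Lemma valid_bucket_step s e x : valid s x -> valid (rcons s e) (bucket_step e x).
Proof.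
case/andP=> le_x /eqP x2; rewrite /valid size_rcons (leq_trans le_x) //=.
by rewrite drop_rcons // /greedy foldl_rcons x2.
Qed.

Lemma close_linked s x z : valid s x -> valid s z -> close_buckets x z -> linked s x.1 z.1.
Proof.
move=> /andP[le_x /eqP x2] /andP[le_z /eqP z2] close_xz; apply/orP; right.
apply/existsP; exists ord_max; rewrite /= le_z /seg.
by rewrite -!size_drop !take_size -x2 -z2.
Qed.

Lemma sorted_linked_step s st e : st.1 = size s ->
  sorted (relpre fst (linked s)) (extended st) ->
  sorted (relpre fst (linked (rcons s e)))
    (rcons (map (bucket_step e) (extended st)) (size (rcons s e), set0)).
Proof.
move=> clock; rewrite -!sorted_map !map_rcons -map_comp /= clock size_rcons => sorted_ext.
by rewrite sorted_rcons2 (sub_sorted (@linked_rcons s e) sorted_ext) /linked eqxx.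
Qed.

Lemma window_invariant_nil : window_invariant [::] (0, [::]).
Proof. by split; rewrite //= /valid /= eqxx. Qed.

Lemma window_invariant_step s st e :
  window_invariant s st -> window_invariant (rcons s e) (window_step st e).
Proof.
case=> clock valid_ext head_ext sorted_ext sparse_l.
set s' := rcons s e; set l0 := map (bucket_step e) (extended st); rewrite /window_invariant.
have -> : extended (window_step st e) = rcons (prune close_buckets l0) (size s', set0).
  by rewrite /extended /= clock size_rcons.
have valid_l0 : all (valid s') l0.
  by rewrite all_map; apply: sub_all valid_ext => x; apply: valid_bucket_step.
split.
- by rewrite /= clock size_rcons.
- rewrite all_rcons /valid leqnn drop_size eqxx /=.
  by apply/allP => x /(mem_subseq (subseq_prune _ _)) /(allP valid_l0).
- rewrite head_rcons head_prune /l0 /extended headI /=.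
  by move: head_ext; rewrite /extended head_rcons.
- apply: sorted_prune (sorted_linked_step e clock sorted_ext) => x z.
  by move=> /(allP valid_l0) x_valid /(allP valid_l0) z_valid; apply: close_linked.
- exact: sparse_prune.
Qed.

Lemma window_invariant_run s : window_invariant s (window_state s).
Proof.
elim/last_ind: s => [|s e IHs]; first exact: window_invariant_nil.
by rewrite /window_state foldl_rcons; apply: window_invariant_step.
Qed.

Variable w : nat.

(* The set of the last bucket that starts no later than the window. *)
Definition window_output st : {set 'I_n} :=
  (nth (0, set0) (extended st) (find (fun x : bucket n => st.1 - w < x.1) (extended st)).-1).2.

Lemma linked_greedy_card_le s ws a b C : a <= ws < b -> linked s a b ->
  is_vertex_cover (drop ws s) C -> m * #|greedy set0 (drop a s)| <= (4 * m + 2) * #|C|.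
Proof.
case/andP=> le_a_ws lt_ws_b /orP[/eqP b_eq | /existsP[t /andP[le_bt close_t]]] coverC.
  have a_eq : a = ws by lia.
  by have := greedy_card_le set0 coverC; rewrite a_eq cards0; nia.
have le_at : a <= t by lia.
have split_s : drop a s = seg a t s ++ drop t s.
  by rewrite /seg -{2}(subnK le_at) -drop_drop cat_take_drop.
have cover_t : is_vertex_cover (drop t s) C.
  by apply: sub_vertex_cover coverC; apply: sub_drop; lia.
have cover_bt : is_vertex_cover (seg b t s) C.
  by apply: sub_vertex_cover coverC => x /mem_take; apply: sub_drop; lia.
have := greedy_card_le (greedy set0 (seg a t s)) cover_t.
have := greedy_card_le set0 cover_bt; rewrite cards0 split_s /greedy foldl_cat -/(greedy _ _).
move: close_t; set g := #|greedy _ (drop t s)|; set ga := #|greedy set0 (seg a t s)|.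
set gb := #|greedy set0 (seg b t s)|; nia.
Qed.

Lemma window_output_correct s st : 0 < w -> window_invariant s st ->
  is_vertex_cover (window w s) (window_output st) /\
  forall C, is_vertex_cover (window w s) C ->
    m * #|window_output st| <= (4 * m + 2) * #|C|.
Proof.
move=> w_gt0 [clock valid_ext head_ext sorted_ext _].
rewrite /window_output /window clock.
set ws := size s - w; set ext := extended st; set p := fun x : bucket n => ws < x.1.
set i := (find p ext).-1; set x := nth (0, set0) ext i.
have lt_i : i < size ext by rewrite /i; have := find_size p ext; rewrite size_rcons; lia.
have /andP[le_x /eqP ->] : valid s x by apply: (allP valid_ext); apply: mem_nth.
have [-> | s_nonnil] := eqVneq s [::].
  by split => // C _; rewrite cards0 muln0.
have has_p : has p ext.
  by rewrite has_rcons /p /= clock /ws ltn_subrL w_gt0 lt0n size_eq0 s_nonnil.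
have find_gt0 : 0 < find p ext.
  by have := nth_find (0, set0) has_p; case: (find p ext) => //; rewrite nth0 /p head_ext.
have find_eq : i.+1 = find p ext by rewrite prednK.
have le_x_ws : x.1 <= ws.
  by rewrite leqNgt; apply/negbT/(@before_find _ (0, set0) p); rewrite -find_eq.
have lt_ws_next : ws < (nth (0, set0) ext i.+1).1.
  by rewrite find_eq; exact: (nth_find (0, set0) has_p).
have linked_next : linked s x.1 (nth (0, set0) ext i.+1).1.
  by apply: (sortedP _ sorted_ext); rewrite find_eq -has_find.
split; first by apply: sub_vertex_cover (greedy_cover set0 _); apply: sub_drop.
by move=> C coverC; apply: linked_greedy_card_le linked_next coverC; rewrite le_x_ws.
Qed.

End Algorithm.

(** * Storing the state in bits *)

Section Simulation.

Variables (n S : nat) (T : Type).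
Variables (init : T) (step : T -> Edge n -> T) (output : T -> {set 'I_n}).
Variables (encode : T -> S.-tuple bool) (decode : S.-tuple bool -> T).
Hypothesis encodeK :
  forall s, uniq s -> decode (encode (foldl step init s)) = foldl step init s.

Definition simulation : stream_algorithm n S :=
  StreamAlgorithm (encode init) (fun b e => encode (step (decode b) e))
    (fun b => output (decode b)).

Lemma run_simulation s : uniq s -> run simulation s = encode (foldl step init s).
Proof.
elim/last_ind: s => [|s e IHs] //; rewrite rcons_uniq => /andP[_ uniq_s].
by rewrite /run foldl_rcons -/(run _ _) IHs //= encodeK // foldl_rcons.
Qed.

Lemma simulation_output s : uniq s ->
  alg_out simulation (run simulation s) = output (foldl step init s).
Proof. by move=> uniq_s; rewrite run_simulation //= encodeK. Qed.

End Simulation.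

Lemma bits_embedding (X : finType) S (x0 : X) : #|X| <= 2 ^ S ->
  exists (enc : X -> S.-tuple bool) (dec : S.-tuple bool -> X), cancel enc dec.
Proof.
move=> le_X; have {}le_X : #|X| <= #|{: S.-tuple bool}| by rewrite card_tuple card_bool.
exists (fun x => enum_val (widen_ord le_X (enum_rank x))).
exists (fun b => if insub (val (enum_rank b)) is Some i then enum_val (i : 'I_#|X|) else x0).
by move=> x; rewrite enum_valK /= valK enum_rankK.
Qed.

Lemma card_set_ord n : #|{: {set 'I_n}}| = 2 ^ n.
Proof.
have := card_powerset [set: 'I_n]; rewrite cardsT card_ord => <-.
by apply: eq_card => A; rewrite powersetE subsetT.
Qed.

Section StateCode.

Variables (n K : nat).

(* Clock values and bucket starts are at most n * n on a stream of distinct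
   edges; a list of at most K buckets is padded with [None]. *)
Definition state_code :=
  ('I_(n * n).+1 * K.-tuple (option ('I_(n * n).+1 * {set 'I_n})))%type.

Lemma pad_subproof (A : Type) (l : seq A) : size (take K (map Some l ++ nseq K None)) == K.
Proof. by rewrite size_takel // size_cat size_nseq leq_addl. Qed.

Definition pad (A : Type) (l : seq A) : K.-tuple (option A) := Tuple (pad_subproof l).

Lemma padK (A : Type) (l : seq A) : size l <= K -> pmap idfun (pad l) = l.
Proof.
move=> le_l; rewrite /= take_cat size_map ltnNge le_l /= take_nseq ?leq_subr //.
by elim: l {le_l} (K - _) => [|x l IHl] k /=; [elim: k | rewrite IHl].
Qed.

Definition encode_state (st : state n) : state_code :=
  (inord st.1, pad [seq (inord x.1, x.2) | x <- st.2]).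

Definition decode_state (c : state_code) : state n :=
  (val c.1, [seq (val x.1, x.2) | x <- pmap idfun c.2]).

Lemma encode_stateK (st : state n) :
  st.1 <= n * n -> all (fun x : bucket n => x.1 <= n * n) st.2 -> size st.2 <= K ->
  decode_state (encode_state st) = st.
Proof.
case: st => t l /= le_t le_l le_K.
rewrite /decode_state /= inordK // padK ?size_map // -map_comp; congr pair.
by apply: map_id_in => x /(allP le_l) le_x /=; rewrite inordK //; case: x {le_x}.
Qed.

Lemma card_state_code_le L : 0 < L -> n < 2 ^ L ->
  #|{: state_code}| <= 2 ^ (2 * L + (n + 3) * L * K).
Proof.
move=> L_gt0 n_lt; rewrite card_prod card_tuple card_option card_prod !card_ord card_set_ord.
have N_le : (n * n).+1 <= 2 ^ (2 * L).
  by rewrite mulnC expnM; apply: leq_trans (leq_wexp2r 2 n_lt); nia.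
have M_le : ((n * n).+1 * 2 ^ n).+1 <= 2 ^ ((n + 3) * L).
  apply: leq_trans (_ : 2 ^ (2 * L + n + 1) <= _); last by apply: leq_pexp2l => //; nia.
  have : 0 < 2 ^ n by rewrite expn_gt0.
  rewrite [2 ^ (_ + 1)]expnD [2 ^ (_ + n)]expnD expn1.
  by move: N_le; set a := 2 ^ (2 * L); set b := 2 ^ n; nia.
by rewrite expnD [2 ^ (_ * K)]expnM leq_mul // leq_wexp2r.
Qed.

End StateCode.

Lemma uniq_size_le n (s : seq (Edge n)) : uniq s -> size s <= n * n.
Proof.
by move/card_uniqP <-; apply: leq_trans (max_card _) _; rewrite card_prod !card_ord.
Qed.

Definition log_bound n := (trunc_log 2 n).+1.
Definition bucket_bound m n := 2 * m * log_bound n + 2.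
Definition space m n := 2 * log_bound n + (n + 3) * log_bound n * bucket_bound m n.

Lemma window_invariant_bounded n m (s : seq (Edge n)) st :
  0 < m -> uniq s -> window_invariant m s st ->
  [/\ st.1 <= n * n, all (fun x : bucket n => x.1 <= n * n) st.2 &
       size st.2 <= bucket_bound m n].
Proof.
move=> m_gt0 uniq_s [clock valid_ext _ _ sparse_l]; have size_s := uniq_size_le uniq_s.
split; first by rewrite clock.
  apply/allP => x x_l; have /andP[le_x _] : valid s x.
    by apply: (allP valid_ext); rewrite mem_rcons inE x_l orbT.
  exact: leq_trans le_x size_s.
rewrite /bucket_bound; apply: (sparse_close_size (n := n)) sparse_l => //.
  exact: (trunc_log_ltn n (isT : 1 < 2)).
by move=> x _; rewrite -[n in _ <= n]card_ord max_card.
Qed.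

Lemma window_algorithm n m w : 0 < m -> 0 < w ->
  exists A : stream_algorithm n (space m n), forall s, valid_stream s ->
    is_vertex_cover (window w s) (alg_out A (run A s)) /\
    forall C, is_vertex_cover (window w s) C ->
      m * #|alg_out A (run A s)| <= (4 * m + 2) * #|C|.
Proof.
move=> m_gt0 w_gt0; set K := bucket_bound m n.
have [enc [dec encK]] := bits_embedding (S := space m n) (encode_state K (0, [::]))
  (card_state_code_le K (ltn0Sn _) (trunc_log_ltn n (isT : 1 < 2))).
have stateK s : uniq s ->
    decode_state (dec (enc (encode_state K (window_state m s)))) = window_state m s.
  move=> uniq_s; rewrite encK.
  by have [] := window_invariant_bounded m_gt0 uniq_s (window_invariant_run m s);
    apply: encode_stateK.
exists (simulation (0, [::]) (window_step m) (window_output w)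
          (fun st => enc (encode_state K st)) (fun b => decode_state (dec b))).
move=> s /andP[uniq_s _]; rewrite simulation_output //.
exact: window_output_correct (window_invariant_run m s).
Qed.

(** * Numerical bounds *)

Lemma INR_muln a b : INR (a * b) = (INR a * INR b)%R.
Proof. by rewrite -multE mult_INR. Qed.

Lemma INR_addn a b : INR (a + b) = (INR a + INR b)%R.
Proof. by rewrite -plusE plus_INR. Qed.

Lemma INR_expn a k : INR (a ^ k) = (INR a ^ k)%R.
Proof. by elim: k => [|k IHk] //; rewrite expnS INR_muln IHk. Qed.

Lemma exists_precision eps : (0 < eps < 1 / 2)%R ->
  exists m : nat, 0 < m /\ (2 <= eps * INR m)%R /\ (INR m <= 3 / eps)%R.
Proof.
move=> [eps_gt0 eps_lt]; have [up_gt up_le] := archimed (2 / eps).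
have up_ge0 : (0 <= up (2 / eps))%Z.
  by apply: le_IZR; apply: Rlt_le; apply: Rlt_trans up_gt; apply: Rdiv_lt_0_compat; lra.
exists (Z.to_nat (up (2 / eps))); rewrite INR_IZR_INZ ZArith.Znat.Z2Nat.id //.
have inv_ge2 : (2 < 1 / eps)%R by apply: (Rmult_lt_reg_r eps) => //; field_simplify; lra.
split; last split.
- apply/ltP/INR_lt; rewrite [INR (Z.to_nat _)]INR_IZR_INZ ZArith.Znat.Z2Nat.id //=.
  by apply: Rle_lt_trans up_gt; apply: Rlt_le; apply: Rdiv_lt_0_compat; lra.
- apply: (Rmult_le_reg_r (/ eps)); first exact: Rinv_0_lt_compat.
  by field_simplify; lra.
- have -> : (3 / eps = 2 / eps + 1 / eps)%R by field; lra.
  lra.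
Qed.

Lemma ln_le_ln x y : (0 < x)%R -> (x <= y)%R -> (ln x <= ln y)%R.
Proof.
move=> x_gt0 /Rle_lt_or_eq_dec[/(ln_increasing _ _ x_gt0)/Rlt_le // | ->].
exact: Rle_refl.
Qed.

Lemma log2R_bounds n : 2 <= n ->
  (1 <= log2R (INR n))%R /\ (INR (log_bound n) <= 2 * log2R (INR n))%R.
Proof.
move=> n_ge2; have ln2_gt0 : (0 < ln 2)%R by have := ln_lt_2; lra.
have log_ge k : (2 ^ k <= INR n)%R -> (INR k <= log2R (INR n))%R.
  move=> pow_le; apply: (Rmult_le_reg_r (ln 2)) => //.
  rewrite /log2R /Rdiv Rmult_assoc Rinv_l ?Rmult_1_r -?ln_pow; try lra.
  by apply: ln_le_ln pow_le; apply: pow_lt; lra.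
have one_le : (1 <= log2R (INR n))%R.
  by apply: (log_ge 1); rewrite pow_1; apply: (le_INR 2); apply/leP.
have t_le : (INR (trunc_log 2 n) <= log2R (INR n))%R.
  apply: log_ge; rewrite -(INR_expn 2); apply: le_INR; apply/leP.
  by apply: trunc_logP; lia.
by split => //; rewrite /log_bound S_INR; lra.
Qed.

Lemma space_poly_le (x L l y eps : R) :
  (2 <= x)%R -> (1 <= l)%R -> (1 <= L <= 2 * l)%R -> (0 < eps < 1 / 2)%R ->
  (0 <= y <= 3 / eps)%R ->
  (2 * L + (x + 3) * L * (2 * y * L + 2) <= 100 * x * l ^ 2 / eps)%R.
Proof.
move=> x_ge2 l_ge1 [L_ge1 L_le] [eps_gt0 eps_lt] [y_ge0 y_le].
have e_ge2 : (2 <= / eps)%R by apply: (Rmult_le_reg_r eps) => //; rewrite Rinv_l; lra.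
rewrite /Rdiv in y_le *; set e := (/ eps)%R in e_ge2 y_le *.
have inner : (2 * y * L + 2 <= 13 * e * l)%R by nra.
have outer : ((x + 3) * L <= 6 * x * l)%R by nra.
have prod : ((x + 3) * L * (2 * y * L + 2) <= 6 * x * l * (13 * e * l))%R.
  by apply: Rmult_le_compat; nra.
have lin : (2 * L <= x * l ^ 2 * e)%R.
  have xe : (4 <= x * e)%R by nra.
  have -> : (x * l ^ 2 * e = x * e * (l * l))%R by ring.
  nra.
nra.
Qed.

Lemma space_bound m n eps : 2 <= n -> (0 < eps < 1 / 2)%R -> (INR m <= 3 / eps)%R ->
  (INR (space m n) <= 100 * INR n * log2R (INR n) ^ 2 / eps)%R.
Proof.
move=> n_ge2 eps_bounds m_le; have [l_ge1 L_le] := log2R_bounds n_ge2.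
have L_ge1 : (1 <= INR (log_bound n))%R.
  by rewrite /log_bound S_INR; have := pos_INR (trunc_log 2 n); lra.
rewrite /space /bucket_bound !(INR_addn, INR_muln) (_ : INR 3 = 3%R); last by rewrite /=; lra.
apply: space_poly_le => //; first by apply: (le_INR 2); apply/leP.
by split; first exact: pos_INR.
Qed.

Lemma approx_ratio eps m o v : 0 < m -> (2 <= eps * INR m)%R ->
  m * o <= (4 * m + 2) * v -> (INR o <= (4 + eps) * INR v)%R.
Proof.
move=> m_gt0 eps_m /leP/le_INR; rewrite !(INR_muln, INR_addn).
have -> : INR 4 = 4%R by rewrite /=; lra.
have -> : INR 2 = 2%R by rewrite /=; lra.
have m_gt0R : (0 < INR m)%R by apply: lt_0_INR; apply/ltP.
have two_v : (2 * INR v <= eps * INR m * INR v)%R.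
  by apply: Rmult_le_compat_r => //; apply: pos_INR.
by move=> le_ov; apply: (Rmult_le_reg_l (INR m)) => //; lra.
Qed.

Theorem theorem4p6 :
  exists C : R, (0 < C)%R /\
  forall (eps : R) (n w : nat),
    (0 < eps < 1 / 2)%R -> (2 <= n)%N -> (0 < w)%N ->
    exists (S : nat) (A : stream_algorithm n S),
      (INR S <= C * INR n * (log2R (INR n)) ^ 2 / eps)%R /\
      forall s : seq (Edge n), valid_stream s ->
        is_vertex_cover (window w s) (alg_out A (run A s)) /\
        (INR #|alg_out A (run A s)| <= (4 + eps) * INR (vc_number (window w s)))%R.
Proof.
exists 100%R; split; first lra.
move=> eps n w eps_bounds n_ge2 w_gt0.
have [m [m_gt0 [eps_m m_le]]] := exists_precision eps_bounds.
have [A A_correct] := window_algorithm n m_gt0 w_gt0.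
exists (space m n), A; split; first exact: space_bound.
move=> s /A_correct[cover_out out_le]; split => //.
apply: approx_ratio m_gt0 eps_m _; apply: leq_vc_number out_le.
apply: leq_mul; first lia.
by rewrite -[n in _ <= n]card_ord max_card.
Qed.
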